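(* Let $G(x)=-x^3$ on $\Omega=\mathbb R^2\times\,]0,1[$, let $m\ge1$, and let positive functions $\widetilde\varrho_\varepsilon$ ($\varepsilon\in\,]0,1]$) solve $\Pi(\widetilde\varrho_\varepsilon)=\varepsilon^{2(m-1)}F+\varepsilon^mG$ on $\Omega$. Let $F(x)=|x^h|^2$. Then for any $l>0$ there is $C(l)>0$ such that, for all $\varepsilon\in\,]0,1]$ and all $x\in\overline{\mathbb B}_l$ (where $\mathbb B_l:=\{x\in\Omega:|x^h|<l\}$): (1) if $m\ge2$, $|\widetilde\varrho_\varepsilon(x)-1|\le C(l)\varepsilon^m$; (2) if $1<m<2$, $|\widetilde\varrho_\varepsilon(x)-1|\le C(l)\varepsilon^{2(m-1)}$; (3) if $m=1$, $|\widetilde\varrho_\varepsilon(x)-\widetilde\varrho(x)|\le C(l)\varepsilon$, where $\widetilde\varrho$ is the positive solution of $\Pi(\widetilde\varrho(x))=F(x)$ on $\Omega$. If instead $F\equiv0$ and $m\ge1$, then $|\widetilde\varrho_\varepsilon(x)-1|\le C\varepsilon^m$ for a constant $C>0$ uniform in $x\in\Omega$ and $\varepsilon\in\,]0,1]$.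
   Context: Points of $\Omega$ are $x=(x^h,x^3)$ with $x^h\in\mathbb R^2$. The pressure is $p(\varrho,\vartheta)=\vartheta^{5/2}P(\varrho/\vartheta^{3/2})+\frac a3\vartheta^4$ with $a>0$, where $P\in C^1([0,\infty))\cap C^2(]0,\infty[)$, $P(0)=0$, $P'(Z)>0$ for all $Z\ge0$, $0<\big(\frac53P(Z)-P'(Z)Z\big)/Z<c$ for all $Z>0$, and $\lim_{Z\to+\infty}P(Z)/Z^{5/3}=P_\infty>0$. Fix a constant $\overline\vartheta>0$ and set $\Pi(\varrho):=\int_1^\varrho\frac{\partial_\varrho p(z,\overline\vartheta)}{z}dz$ for $\varrho>0$. *)

From Stdlib Require Import Reals.
From Coquelicot Require Import Coquelicot.
Open Scope R_scope.

Definition pressure (P : R -> R) (a rho theta : R) : R :=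
  Rpower theta (5/2) * P (rho / Rpower theta (3/2)) + a / 3 * theta ^ 4.

Definition PiF (P : R -> R) (a thb rho : R) : R :=
  RInt (fun z => Derive (fun r => pressure P a r thb) z / z) 1 rho.

Definition P_hyp (P P' : R -> R) (c Pinf : R) : Prop :=
  (* P in C^1([0,oo)) *)
  (forall Z, 0 < Z -> is_derive P Z (P' Z)) /\
  filterlim (fun h => (P h - P 0) / h) (at_right 0) (locally (P' 0)) /\
  (forall Z, 0 < Z -> continuous P' Z) /\
  filterlim P' (at_right 0) (locally (P' 0)) /\
  (* P in C^2(]0,oo[) *)
  (forall Z, 0 < Z -> ex_derive P' Z /\ continuous (Derive P') Z) /\
  P 0 = 0 /\
  (forall Z, 0 <= Z -> 0 < P' Z) /\
  (forall Z, 0 < Z -> 0 < (5/3 * P Z - P' Z * Z) / Z /\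
                      (5/3 * P Z - P' Z * Z) / Z < c) /\
  0 < Pinf /\
  is_lim (fun Z => P Z / Rpower Z (5/3)) p_infty Pinf.

(* Omega = R^2 x ]0,1[ ; points x = (x1, x2, x3) with x^h = (x1, x2). *)
Definition inOmega (x1 x2 x3 : R) : Prop := 0 < x3 < 1.

Definition normh (x1 x2 : R) : R := sqrt (x1 ^ 2 + x2 ^ 2).

Definition Gfun (x1 x2 x3 : R) : R := - x3.

Definition solves_family (P : R -> R) (a thb m : R) (F : R -> R -> R -> R)
    (rho : R -> R -> R -> R -> R) : Prop :=
  forall eps x1 x2 x3, 0 < eps <= 1 -> inOmega x1 x2 x3 ->
    0 < rho eps x1 x2 x3 /\
    PiF P a thb (rho eps x1 x2 x3) =
      Rpower eps (2 * (m - 1)) * F x1 x2 x3 + Rpower eps m * Gfun x1 x2 x3.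

From Stdlib Require Import Reals Lra.
From Coquelicot Require Import Coquelicot.
Open Scope R_scope.

(* Pi' (z) = d_rho p(z, thb) / z = thb^(5/2) P'(z / thb^(3/2)) / (thb^(3/2) z)
   is bounded below by a positive constant on every interval ]0, R], since P' is
   continuous and positive on [0, +oo[; and Pi(R) -> +oo because P grows like
   Z^(5/3).  A right-hand side bounded above by B therefore confines the solution
   to some ]0, R], on which Pi^-1 is Lipschitz with some constant K.  As Pi(1) = 0,
   |rho_eps - 1| <= K (eps^(2(m-1)) l^2 + eps^m), and the smaller power of eps
   dominates; for m = 1, |rho_eps - rho| <= K |eps x^3| <= K eps. *)

(* No hypothesis on [x]: [Rpower x y = exp (y * ln x)] and [ln] is [0] on [x <= 0]. *)
Lemma Rpower_gt0 x y : 0 < Rpower x y.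
Proof. apply exp_pos. Qed.

Lemma Rpower_le_1 e r : 0 < e <= 1 -> 0 <= r -> Rpower e r <= 1.
Proof.
  intros He Hr.
  assert (H1 : Rpower 1 r = 1) by (unfold Rpower; rewrite ln_1, Rmult_0_r; apply exp_0).
  rewrite <- H1; apply Rle_Rpower_l; lra.
Qed.

Lemma Rpower_le_exponent e p q : 0 < e <= 1 -> p <= q -> Rpower e q <= Rpower e p.
Proof.
  intros He Hpq.
  replace q with (p + (q - p)) by ring; rewrite Rpower_plus.
  pose proof (Rpower_gt0 e p); pose proof (Rpower_le_1 e (q - p) He ltac:(lra)).
  nra.
Qed.

Lemma Rpower_sum_le e p q r A :
  0 < e <= 1 -> 0 <= A -> r <= p -> r <= q ->
  Rpower e p * A + Rpower e q <= (A + 1) * Rpower e r.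
Proof.
  intros He HA Hp Hq.
  pose proof (Rpower_le_exponent e r p He Hp).
  pose proof (Rpower_le_exponent e r q He Hq).
  nra.
Qed.

Lemma RInt_ge_const (g : R -> R) k x y :
  x <= y -> ex_RInt g x y -> (forall z, x < z < y -> k <= g z) ->
  k * (y - x) <= RInt g x y.
Proof.
  intros Hxy Hg Hk.
  replace (k * (y - x)) with (RInt (fun _ => k) x y)
    by (rewrite RInt_const; unfold scal; simpl; unfold mult; simpl; ring).
  apply RInt_le; auto.
  apply ex_RInt_const.
Qed.

Lemma is_derive_comp_div (g : R -> R) s z dg :
  s <> 0 -> is_derive g (z / s) dg -> is_derive (fun r => g (r / s)) z (dg / s).
Proof.
  intros Hs Hg.
  replace (dg / s) with (scal (/ s) dg) by (unfold scal; simpl; unfold mult; simpl; field; auto).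
  apply (is_derive_comp g (fun r => r / s)); auto.
  auto_derive; auto; field; auto.
Qed.

Lemma continuous_comp_div (g : R -> R) s z :
  s <> 0 -> continuous g (z / s) -> continuous (fun r => g (r / s)) z.
Proof.
  intros Hs Hg.
  apply (continuous_comp (fun r => r / s) g); auto.
  apply (ex_derive_continuous (fun r => r / s)); auto_derive; auto.
Qed.

Lemma pos_lower_bound_segment (g : R -> R) M :
  0 < M -> (forall Z, 0 <= Z -> 0 < g Z) -> (forall Z, 0 < Z -> continuous g Z) ->
  filterlim g (at_right 0) (locally (g 0)) ->
  exists k, 0 < k /\ forall Z, 0 <= Z <= M -> k <= g Z.
Proof.
  intros HM Hpos Hcont Hright.
  assert (Hg0 : 0 < g 0) by (apply Hpos; lra).
  assert (Hhalf : 0 < g 0 / 2) by lra.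
  destruct (proj1 (filterlim_locally _ _) Hright (mkposreal _ Hhalf)) as [[d Hd] Hnear0].
  simpl in Hnear0.
  assert (Hnear : forall Z, 0 <= Z < d -> g 0 / 2 <= g Z).
  { intros Z HZ. destruct (Req_dec Z 0) as [->|HZ0]; [lra|].
    assert (HZball : ball 0 d Z).
    { apply (Rabs_lt_between' Z 0 d). lra. }
    specialize (Hnear0 Z HZball ltac:(lra)).
    apply Rabs_lt_between' in Hnear0. lra. }
  set (d2 := Rmin (d / 2) M).
  assert (Hd2 : 0 < d2) by (apply Rmin_glb_lt; lra).
  assert (Hd2M : d2 <= M) by apply Rmin_r.
  assert (Hd2d : d2 <= d / 2) by apply Rmin_l.
  destruct (continuity_ab_min g d2 M Hd2M) as [zmin [Hmin Hzmin]].
  { intros z Hz. apply continuity_pt_filterlim, Hcont. lra. }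
  assert (Hgmin : 0 < g zmin) by (apply Hpos; lra).
  exists (Rmin (g 0 / 2) (g zmin)). split; [now apply Rmin_glb_lt|].
  intros Z HZ. destruct (Rlt_le_dec Z d2).
  - eapply Rle_trans; [apply Rmin_l|]. apply Hnear. lra.
  - eapply Rle_trans; [apply Rmin_r|]. apply Hmin. lra.
Qed.

Section InverseLipschitz.

Variable f : R -> R.

Hypothesis f_slope : forall R0, 0 < R0 -> exists k, 0 < k /\
  forall x y, 0 < x -> x <= y -> y <= R0 -> k * (y - x) <= f y - f x.

Hypothesis f_unbounded : forall L, exists R0, 0 < R0 /\ L < f R0.

Lemma slope_increasing x y : 0 < x -> x <= y -> f x <= f y.
Proof.
  intros Hx Hxy. destruct (f_slope y ltac:(lra)) as [k [Hk Hslope]].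
  pose proof (Hslope x y Hx Hxy (Rle_refl y)). nra.
Qed.

Lemma sublevel_bounded B : exists R0, 0 < R0 /\ forall x, 0 < x -> f x <= B -> x <= R0.
Proof.
  destruct (f_unbounded B) as [R0 [HR0 HB]].
  exists R0. split; auto. intros x Hx Hfx.
  destruct (Rle_lt_dec x R0) as [|Hlt]; auto.
  pose proof (slope_increasing R0 x HR0 (Rlt_le _ _ Hlt)). lra.
Qed.

Lemma sublevel_inverse_lipschitz B : exists K, 0 < K /\
  forall x y, 0 < x -> 0 < y -> f x <= B -> f y <= B ->
  Rabs (x - y) <= K * Rabs (f x - f y).
Proof.
  destruct (sublevel_bounded B) as [R0 [HR0 Hbound]].
  destruct (f_slope R0 HR0) as [k [Hk Hslope]].
  assert (Hordered : forall x y, 0 < x -> x <= y -> f x <= B -> f y <= B ->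
                       Rabs (x - y) <= / k * Rabs (f x - f y)).
  { intros x y Hx Hxy Hfx Hfy.
    pose proof (Hslope x y Hx Hxy (Hbound y ltac:(lra) Hfy)).
    rewrite Rabs_left1, (Rabs_left1 (f x - f y)) by nra.
    apply (Rmult_le_reg_l k); auto.
    rewrite <- Rmult_assoc, Rinv_r by lra. lra. }
  exists (/ k). split; [now apply Rinv_0_lt_compat|].
  intros x y Hx Hy Hfx Hfy. destruct (Rle_lt_dec x y).
  - now apply Hordered.
  - rewrite Rabs_minus_sym, (Rabs_minus_sym (f x)). apply Hordered; auto; lra.
Qed.

End InverseLipschitz.

(* [d_rho p(z, thb) / z], the integrand of [PiF] (see [is_derive_pressure]). *)
Definition Pi_integrand (P' : R -> R) (thb z : R) : R :=
  Rpower thb (5/2) * (P' (z / Rpower thb (3/2)) / Rpower thb (3/2)) / z.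

Section EnthalpyFunction.

Variables (P P' : R -> R) (a Pinf thb : R).

Hypothesis P_derive : forall Z, 0 < Z -> is_derive P Z (P' Z).
Hypothesis P'_continuous : forall Z, 0 < Z -> continuous P' Z.
Hypothesis P'_right_continuous_0 : filterlim P' (at_right 0) (locally (P' 0)).
Hypothesis P'_pos : forall Z, 0 <= Z -> 0 < P' Z.
Hypothesis Pinf_pos : 0 < Pinf.
Hypothesis P_growth : is_lim (fun Z => P Z / Rpower Z (5/3)) p_infty Pinf.

Lemma is_derive_pressure z : 0 < z ->
  is_derive (fun r => pressure P a r thb) z
    (Rpower thb (5/2) * (P' (z / Rpower thb (3/2)) / Rpower thb (3/2))).
Proof.
  intros Hz. unfold pressure.
  set (s := Rpower thb (3/2)). assert (Hs : 0 < s) by apply Rpower_gt0.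
  rewrite <- (Rplus_0_r (Rpower thb (5/2) * _)).
  apply (is_derive_plus (fun r => Rpower thb (5/2) * P (r / s)) (fun _ => a / 3 * thb ^ 4)).
  - apply is_derive_scal, is_derive_comp_div; [lra|].
    apply P_derive, Rdiv_lt_0_compat; lra.
  - exact (@is_derive_const R_AbsRing R_NormedModule (a / 3 * thb ^ 4) z).
Qed.

Lemma PiF_RInt rho : 0 < rho -> PiF P a thb rho = RInt (Pi_integrand P' thb) 1 rho.
Proof.
  intros Hrho. apply RInt_ext. intros z Hz.
  assert (0 < Rmin 1 rho) by (apply Rmin_glb_lt; lra).
  unfold Pi_integrand. f_equal. apply is_derive_unique, is_derive_pressure. lra.
Qed.

Lemma continuous_Pi_integrand z : 0 < z -> continuous (Pi_integrand P' thb) z.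
Proof.
  intros Hz. unfold Pi_integrand.
  set (s := Rpower thb (3/2)). assert (Hs : 0 < s) by apply Rpower_gt0.
  apply (continuous_mult (fun z => Rpower thb (5/2) * (P' (z / s) / s)) (fun z => / z)).
  - apply (continuous_scal_r (Rpower thb (5/2)) (fun z => P' (z / s) / s)).
    apply (continuous_mult (fun z => P' (z / s)) (fun _ => / s)).
    + apply continuous_comp_div; [lra|]. apply P'_continuous, Rdiv_lt_0_compat; lra.
    + apply continuous_const.
  - apply (ex_derive_continuous (fun z => / z)). auto_derive. lra.
Qed.

Lemma ex_RInt_Pi_integrand x y : 0 < x -> 0 < y -> ex_RInt (Pi_integrand P' thb) x y.
Proof.
  intros Hx Hy. apply (ex_RInt_continuous (V := R_CompleteNormedModule)). intros z Hz.
  apply continuous_Pi_integrand.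
  assert (0 < Rmin x y) by (apply Rmin_glb_lt; lra). lra.
Qed.

Lemma PiF_sub x y : 0 < x -> 0 < y ->
  PiF P a thb y - PiF P a thb x = RInt (Pi_integrand P' thb) x y.
Proof.
  intros Hx Hy. rewrite !PiF_RInt by auto.
  rewrite <- (RInt_Chasles (Pi_integrand P' thb) 1 x y)
    by (apply ex_RInt_Pi_integrand; lra).
  unfold plus; simpl. ring.
Qed.

Lemma Pi_integrand_lower_bound R0 : 0 < R0 ->
  exists k, 0 < k /\ forall z, 0 < z <= R0 -> k <= Pi_integrand P' thb z.
Proof.
  intros HR0. unfold Pi_integrand.
  set (s := Rpower thb (3/2)). assert (Hs : 0 < s) by apply Rpower_gt0.
  set (T := Rpower thb (5/2)). assert (HT : 0 < T) by apply Rpower_gt0.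
  destruct (pos_lower_bound_segment P' (R0 / s)) as [kP [HkP HkP_le]]; auto.
  { apply Rdiv_lt_0_compat; lra. }
  exists (T * (kP / s) / R0). split.
  { apply Rdiv_lt_0_compat; [apply Rmult_lt_0_compat, Rdiv_lt_0_compat|]; lra. }
  intros z Hz.
  assert (HPz : kP <= P' (z / s)).
  { apply HkP_le. split.
    - apply Rlt_le, Rdiv_lt_0_compat; lra.
    - apply Rmult_le_compat_r; [apply Rlt_le, Rinv_0_lt_compat|]; lra. }
  unfold Rdiv. apply Rmult_le_compat.
  - apply Rlt_le, Rmult_lt_0_compat, Rmult_lt_0_compat; auto using Rinv_0_lt_compat.
  - apply Rlt_le, Rinv_0_lt_compat; lra.
  - apply Rmult_le_compat_l, Rmult_le_compat_r; auto using Rlt_le, Rinv_0_lt_compat.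
  - apply Rinv_le_contravar; lra.
Qed.

Lemma PiF_slope R0 : 0 < R0 -> exists k, 0 < k /\
  forall x y, 0 < x -> x <= y -> y <= R0 -> k * (y - x) <= PiF P a thb y - PiF P a thb x.
Proof.
  intros HR0. destruct (Pi_integrand_lower_bound R0 HR0) as [k [Hk Hlow]].
  exists k. split; auto. intros x y Hx Hxy HyR.
  rewrite PiF_sub by lra.
  apply RInt_ge_const; auto.
  - apply ex_RInt_Pi_integrand; lra.
  - intros z Hz. apply Hlow. lra.
Qed.

Lemma P_superlinear L : exists M, 0 < M /\ forall Y, M <= Y -> L * Y <= P Y.
Proof.
  apply is_lim_spec in P_growth.
  assert (Hhalf : 0 < Pinf / 2) by lra.
  destruct (P_growth (mkposreal _ Hhalf)) as [M1 HM1]. simpl in HM1.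
  set (N := 2 * Rabs L / Pinf + 1).
  assert (HN : 0 < N) by (pose proof (Rabs_pos L); unfold N, Rdiv; pose proof (Rinv_0_lt_compat _ Pinf_pos); nra).
  exists (Rmax (M1 + 1) (Rmax 1 (Rpower N (3/2)))). split.
  { eapply Rlt_le_trans; [|eapply Rle_trans; [apply Rmax_l|apply Rmax_r]]; lra. }
  intros Y HY.
  pose proof (Rmax_l (M1 + 1) (Rmax 1 (Rpower N (3/2)))).
  pose proof (Rmax_r (M1 + 1) (Rmax 1 (Rpower N (3/2)))).
  pose proof (Rmax_l 1 (Rpower N (3/2))). pose proof (Rmax_r 1 (Rpower N (3/2))).
  assert (HY0 : 0 < Y) by lra.
  assert (HY53 : Rpower Y (5/3) = Y * Rpower Y (2/3)).
  { replace (5/3) with (1 + 2/3) by field. now rewrite Rpower_plus, Rpower_1. }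
  assert (HY23 : N <= Rpower Y (2/3)).
  { replace N with (Rpower (Rpower N (3/2)) (2/3))
      by (rewrite Rpower_mult; replace (3/2 * (2/3)) with 1 by field; now rewrite Rpower_1).
    apply Rle_Rpower_l; [lra|]. split; [apply Rpower_gt0|lra]. }
  specialize (HM1 Y ltac:(lra)). apply Rabs_lt_between' in HM1.
  assert (HPY : Pinf / 2 * Rpower Y (5/3) < P Y).
  { pose proof (Rpower_gt0 Y (5/3)).
    replace (P Y) with (P Y / Rpower Y (5/3) * Rpower Y (5/3)) by (field; lra).
    nra. }
  assert (HNL : L <= Pinf / 2 * N).
  { replace (Pinf / 2 * N) with (Rabs L + Pinf / 2) by (unfold N; field; lra).
    pose proof (Rle_abs L). lra. }
  assert (Pinf / 2 * N * Y <= Pinf / 2 * (Y * Rpower Y (2/3))).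
  { rewrite Rmult_assoc. apply Rmult_le_compat_l; nra. }
  rewrite HY53 in HPY. nra.
Qed.

Lemma PiF_ge_secant b : 1 <= b ->
  Rpower thb (5/2) / b * (P (b / Rpower thb (3/2)) - P (1 / Rpower thb (3/2)))
    <= PiF P a thb b.
Proof.
  intros Hb. rewrite PiF_RInt by lra.
  set (s := Rpower thb (3/2)). assert (Hs : 0 < s) by apply Rpower_gt0.
  set (T := Rpower thb (5/2)). assert (HT : 0 < T) by apply Rpower_gt0.
  set (h := fun z => T / b * (P' (z / s) / s)).
  assert (Hh : is_RInt h 1 b (T / b * (P (b / s) - P (1 / s)))).
  { replace (T / b * (P (b / s) - P (1 / s)))
      with (minus (T / b * P (b / s)) (T / b * P (1 / s)))
      by (unfold minus, plus, opp; simpl; ring).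
    apply (is_RInt_derive (fun z => T / b * P (z / s)) h);
      intros z Hz; rewrite Rmin_left, Rmax_right in Hz by lra; unfold h.
    - apply is_derive_scal, is_derive_comp_div; [lra|].
      apply P_derive, Rdiv_lt_0_compat; lra.
    - apply (continuous_scal_r (T / b) (fun z => P' (z / s) / s)).
      apply (continuous_mult (fun z => P' (z / s)) (fun _ => / s)).
      + apply continuous_comp_div; [lra|]. apply P'_continuous, Rdiv_lt_0_compat; lra.
      + apply continuous_const. }
  rewrite <- (is_RInt_unique _ _ _ _ Hh).
  apply RInt_le; [lra | eexists; exact Hh | apply ex_RInt_Pi_integrand; lra |].
  intros z Hz. unfold h, Pi_integrand. fold s T.
  assert (0 < P' (z / s)) by (apply P'_pos, Rlt_le, Rdiv_lt_0_compat; lra).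
  assert (0 < T * (P' (z / s) / s)) by (apply Rmult_lt_0_compat, Rdiv_lt_0_compat; lra).
  replace (T / b * (P' (z / s) / s)) with (T * (P' (z / s) / s) * / b) by (field; lra).
  apply Rmult_le_compat_l; [lra|]. apply Rinv_le_contravar; lra.
Qed.

Lemma PiF_unbounded L : exists R0, 0 < R0 /\ L < PiF P a thb R0.
Proof.
  set (s := Rpower thb (3/2)). assert (Hs : 0 < s) by apply Rpower_gt0.
  set (T := Rpower thb (5/2)). assert (HT : 0 < T) by apply Rpower_gt0.
  set (A := T * Rabs (P (1 / s))).
  destruct (P_superlinear (s * (Rabs L + A + 1) / T)) as [M [HM HPM]].
  set (Y := Rmax M (1 / s)).
  assert (HMY : M <= Y) by apply Rmax_l.
  assert (HsY : 1 <= s * Y).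
  { replace 1 with (s * (1 / s)) by (field; lra). apply Rmult_le_compat_l; [lra|apply Rmax_r]. }
  exists (s * Y). split; [lra|].
  eapply Rlt_le_trans; [|apply PiF_ge_secant; exact HsY]. fold s T.
  replace (s * Y / s) with Y by (field; lra).
  specialize (HPM Y HMY).
  assert (Hfactor : 0 < T / (s * Y) <= T).
  { split; [apply Rdiv_lt_0_compat; lra|].
    unfold Rdiv. rewrite <- (Rmult_1_r T) at 2. apply Rmult_le_compat_l; [lra|].
    rewrite <- Rinv_1. apply Rinv_le_contravar; lra. }
  assert (Hmain : T / (s * Y) * (s * (Rabs L + A + 1) / T * Y) = Rabs L + A + 1)
    by (field; lra).
  assert (Hcorr : T / (s * Y) * P (1 / s) <= A).
  { unfold A. pose proof (Rle_abs (P (1 / s))). pose proof (Rabs_pos (P (1 / s))). nra. }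
  pose proof (Rle_abs L).
  assert (T / (s * Y) * (s * (Rabs L + A + 1) / T * Y) <= T / (s * Y) * P Y)
    by (apply Rmult_le_compat_l; lra).
  rewrite Rmult_minus_distr_l. lra.
Qed.

End EnthalpyFunction.

Lemma PiF_1 (P : R -> R) a thb : PiF P a thb 1 = 0.
Proof. unfold PiF. now rewrite RInt_point. Qed.

Lemma PiF_sublevel_inverse_lipschitz (P P' : R -> R) a c Pinf thb B :
  P_hyp P P' c Pinf -> exists K, 0 < K /\
  forall x y, 0 < x -> 0 < y -> PiF P a thb x <= B -> PiF P a thb y <= B ->
  Rabs (x - y) <= K * Rabs (PiF P a thb x - PiF P a thb y).
Proof.
  intros (Hder & _ & Hcont & Hcont0 & _ & _ & Hpos & _ & Hinf & Hlim).
  apply sublevel_inverse_lipschitz.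
  - now apply (PiF_slope P P').
  - now apply (PiF_unbounded P P' a Pinf).
Qed.

Lemma forcing_bounds e p q h B x3 :
  0 < e <= 1 -> 0 <= p -> 0 <= h <= B -> 0 < x3 < 1 ->
  Rpower e p * h + Rpower e q * - x3 <= B /\
  Rabs (Rpower e p * h + Rpower e q * - x3) <= Rpower e p * B + Rpower e q.
Proof.
  intros He Hp Hh Hx.
  pose proof (Rpower_gt0 e p); pose proof (Rpower_gt0 e q).
  pose proof (Rpower_le_1 e p He Hp).
  split; [nra|].
  apply Rabs_le; split; nra.
Qed.

Section Estimates.

Variables (P P' : R -> R) (a c Pinf thb m : R).

Hypothesis HP : P_hyp P P' c Pinf.

Lemma quadratic_forcing_estimates (rho : R -> R -> R -> R -> R) :
  1 <= m -> solves_family P a thb m (fun x1 x2 _ => normh x1 x2 ^ 2) rho ->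
  forall l, 0 < l -> exists C, 0 < C /\
    forall eps x1 x2 x3, 0 < eps <= 1 -> inOmega x1 x2 x3 -> normh x1 x2 <= l ->
      (2 <= m -> Rabs (rho eps x1 x2 x3 - 1) <= C * Rpower eps m) /\
      (1 < m < 2 -> Rabs (rho eps x1 x2 x3 - 1) <= C * Rpower eps (2 * (m - 1))) /\
      (m = 1 -> forall rho0 : R -> R -> R -> R,
         (forall y1 y2 y3, inOmega y1 y2 y3 ->
            0 < rho0 y1 y2 y3 /\ PiF P a thb (rho0 y1 y2 y3) = normh y1 y2 ^ 2) ->
         Rabs (rho eps x1 x2 x3 - rho0 x1 x2 x3) <= C * eps).
Proof.
  intros Hm Hsol l Hl.
  destruct (PiF_sublevel_inverse_lipschitz P P' a c Pinf thb (l ^ 2) HP) as [K [HK Hstab]].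
  exists (K * (l ^ 2 + 1)). split; [nra|].
  intros eps x1 x2 x3 He Hx Hn.
  destruct (Hsol eps x1 x2 x3 He Hx) as [Hr HPi].
  unfold Gfun in HPi.
  assert (Hh : 0 <= normh x1 x2 ^ 2 <= l ^ 2).
  { split; [apply pow2_ge_0|]. apply pow_incr. split; [apply sqrt_pos | exact Hn]. }
  destruct (forcing_bounds eps (2 * (m - 1)) m _ _ x3 He ltac:(lra) Hh Hx) as [HB Habs].
  rewrite <- HPi in HB, Habs.
  assert (Hnear1 : Rabs (rho eps x1 x2 x3 - 1)
                   <= K * (Rpower eps (2 * (m - 1)) * l ^ 2 + Rpower eps m)).
  { eapply Rle_trans; [apply Hstab; rewrite ?PiF_1; lra|].
    rewrite PiF_1, Rminus_0_r. now apply Rmult_le_compat_l; [lra|]. }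
  split; [|split].
  + intros Hm2. rewrite Rmult_assoc. eapply Rle_trans; [exact Hnear1|].
    apply Rmult_le_compat_l; [lra|]. apply Rpower_sum_le; nra.
  + intros Hm2. rewrite Rmult_assoc. eapply Rle_trans; [exact Hnear1|].
    apply Rmult_le_compat_l; [lra|]. apply Rpower_sum_le; nra.
  + intros -> rho0 Hrho0. destruct (Hrho0 x1 x2 x3 Hx) as [Hr0 HPi0].
    replace (2 * (1 - 1)) with 0 in HPi by ring.
    rewrite Rpower_O, Rpower_1, Rmult_1_l in HPi by lra.
    eapply Rle_trans; [apply Hstab; lra|].
    rewrite HPi, HPi0.
    replace (normh x1 x2 ^ 2 + eps * - x3 - normh x1 x2 ^ 2) with (- (eps * x3)) by ring.
    destruct Hx as [Hx3 Hx3']. rewrite Rabs_Ropp, Rabs_right, Rmult_assoc by nra.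
    apply Rmult_le_compat_l; nra.
Qed.

Lemma zero_forcing_estimate (rho : R -> R -> R -> R -> R) :
  1 <= m -> solves_family P a thb m (fun _ _ _ => 0) rho ->
  exists C, 0 < C /\
    forall eps x1 x2 x3, 0 < eps <= 1 -> inOmega x1 x2 x3 ->
      Rabs (rho eps x1 x2 x3 - 1) <= C * Rpower eps m.
Proof.
  intros Hm Hsol.
  destruct (PiF_sublevel_inverse_lipschitz P P' a c Pinf thb 0 HP) as [K [HK Hstab]].
  exists K. split; [lra|].
  intros eps x1 x2 x3 He Hx.
  destruct (Hsol eps x1 x2 x3 He Hx) as [Hr HPi].
  unfold Gfun in HPi.
  destruct (forcing_bounds eps (2 * (m - 1)) m 0 0 x3 He ltac:(lra) ltac:(lra) Hx)
    as [HB Habs].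
  rewrite <- HPi in HB, Habs.
  eapply Rle_trans; [apply Hstab; rewrite ?PiF_1; lra|].
  rewrite PiF_1, Rminus_0_r. apply Rmult_le_compat_l; lra.
Qed.

End Estimates.

Theorem proposition2p4 (P P' : R -> R) (a c Pinf thb m : R) :
  0 < a -> 0 < thb -> P_hyp P P' c Pinf -> 1 <= m ->
  (* Case F(x) = |x^h|^2 *)
  (forall rho : R -> R -> R -> R -> R,
     solves_family P a thb m (fun x1 x2 _ => normh x1 x2 ^ 2) rho ->
     forall l, 0 < l -> exists C, 0 < C /\
       forall eps x1 x2 x3, 0 < eps <= 1 -> inOmega x1 x2 x3 ->
         normh x1 x2 <= l ->
         (2 <= m -> Rabs (rho eps x1 x2 x3 - 1) <= C * Rpower eps m) /\
         (1 < m < 2 ->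
            Rabs (rho eps x1 x2 x3 - 1) <= C * Rpower eps (2 * (m - 1))) /\
         (m = 1 -> forall rho0 : R -> R -> R -> R,
            (forall y1 y2 y3, inOmega y1 y2 y3 ->
               0 < rho0 y1 y2 y3 /\
               PiF P a thb (rho0 y1 y2 y3) = normh y1 y2 ^ 2) ->
            Rabs (rho eps x1 x2 x3 - rho0 x1 x2 x3) <= C * eps)) /\
  (* Case F = 0 *)
  (forall rho : R -> R -> R -> R -> R,
     solves_family P a thb m (fun _ _ _ => 0) rho ->
     exists C, 0 < C /\
       forall eps x1 x2 x3, 0 < eps <= 1 -> inOmega x1 x2 x3 ->
         Rabs (rho eps x1 x2 x3 - 1) <= C * Rpower eps m).
Proof.
  intros _ _ HP Hm. split.
  - intros rho. now apply (quadratic_forcing_estimates P P' a c Pinf).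
  - intros rho. now apply (zero_forcing_estimate P P' a c Pinf).
Qed.
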